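(* Let $K$ be a field of characteristic $p$ with $K \neq \mathbb{F}_2$, let $S \subseteq \mathbb{N}_0$ and $m \in \mathbb{N}$. Then: (1) $mS = \{ms : s \in S\}$ is a $K$-DML set over split torus if and only if $S$ is a $K$-DML set over split torus; (2) $m + S = \{m + s : s \in S\}$ is a $K$-DML set over split torus if and only if $S$ is a $K$-DML set over split torus.
   Context: For a quasi-projective variety $X$ over $K$, a set $S \subseteq \mathbb{N}_0$ is a $K$-DML set over $X$ if there exist an endomorphism $\Phi$ of $X$ (a morphism $X \to X$ defined over $K$), a point $\alpha \in X(K)$ and a closed subvariety $V \subseteq X$ defined over $K$ (not necessarily irreducible) such that $S = \{ n \in \mathbb{N}_0 : \Phi^n(\alpha) \in V(K)\}$. $S$ is a $K$-DML set over split torus if it is a $K$-DML set over $\mathbb{G}_m^k$ for some $k \in \mathbb{N}$. $\mathbb{N}$ denotes the positive integers and $\mathbb{N}_0 = \mathbb{N}\cup\{0\}$. *)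

From HB Require Import structures.
From mathcomp Require Import all_boot all_order all_algebra.
From mathcomp Require Import mpoly.
Set Implicit Arguments. Unset Strict Implicit. Unset Printing Implicit Defensive.
Import Order.TTheory GRing.Theory Num.Theory.
Local Open Scope ring_scope.

(* The split torus G_m^k over a field K has coordinate ring the Laurent
   polynomial ring K[x_1^{+-1},...,x_k^{+-1}].  Every Laurent polynomial
   is written  P / (x_1 ... x_k)^e  with P a polynomial and e : nat. *)

Definition xprod (K : fieldType) (k : nat) : {mpoly K[k]} := \prod_(j < k) 'X_j.

(* A morphism G_m^k -> G_m^k defined over K is the same as a K-algebra
   endomorphism of the coordinate ring, i.e. a k-tuple of Laurent
   polynomials f_i = num i / (x_1...x_k)^(den i) each of which is a unit
   of the Laurent polynomial ring: there is a Laurent polynomial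
   g_i = q / (x_1...x_k)^d with f_i * g_i = 1, i.e.
   num i * q = (x_1...x_k)^(den i + d). *)
Definition is_torus_endo (K : fieldType) (k : nat)
  (num : 'I_k -> {mpoly K[k]}) (den : 'I_k -> nat) : Prop :=
  forall i : 'I_k, exists (q : {mpoly K[k]}) (d : nat),
    num i * q = xprod K k ^+ (den i + d).

Definition torus_map (K : fieldType) (k : nat)
  (num : 'I_k -> {mpoly K[k]}) (den : 'I_k -> nat) (a : 'I_k -> K) : 'I_k -> K :=
  fun i => (num i).@[a] / (\prod_(j < k) a j) ^+ den i.

Definition torus_point (K : fieldType) (k : nat) (a : 'I_k -> K) : Prop :=
  forall j, a j != 0.

(* S is a K-DML set over G_m^k: there are an endomorphism Phi of G_m^k
   over K, a point alpha in G_m^k(K) and a closed subvariety V of G_m^k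
   defined over K (the zero locus in G_m^k of finitely many Laurent
   polynomials; after clearing the monomial denominators, which are
   units on the torus, of finitely many polynomials) such that
   S = { n | Phi^n(alpha) \in V(K) }. *)
Definition DML_torus (K : fieldType) (k : nat) (S : nat -> Prop) : Prop :=
  exists (num : 'I_k -> {mpoly K[k]}) (den : 'I_k -> nat),
    is_torus_endo num den /\
    exists alpha : 'I_k -> K, torus_point alpha /\
    exists V : seq {mpoly K[k]},
      forall n : nat,
        S n <-> (forall P, P \in V -> P.@[iter n (torus_map num den) alpha] = 0).

Definition DML_split_torus (K : fieldType) (S : nat -> Prop) : Prop :=
  exists k : nat, (0 < k)%N /\ DML_torus K k S.

Definition scale_set (m : nat) (S : nat -> Prop) : nat -> Prop :=
  fun n => exists s, S s /\ n = (m * s)%N.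
Definition shift_set (m : nat) (S : nat -> Prop) : nat -> Prop :=
  fun n => exists s, S s /\ n = (m + s)%N.

From HB Require Import structures.
From mathcomp Require Import all_boot all_order all_algebra zify.
From mathcomp Require Import mpoly ssrcomplements.
From Stdlib Require Import FunctionalExtensionality.
Set Implicit Arguments. Unset Strict Implicit. Unset Printing Implicit Defensive.
Import Order.TTheory GRing.Theory Num.Theory.
Local Open Scope ring_scope.

(* An endomorphism of G_m^k over K is a monomial map
   a |-> (c_i * prod_j a_j ^ z_ij)_i with all c_i <> 0, because the units of
   the Laurent polynomial ring are its nonzero monomials; monomial maps are
   closed under composition and under permuting or duplicating coordinates.
   If mS is a DML set for (Phi, alpha, V), then S is one for
   (Phi^m, alpha, V); if m + S is, then S is one for (Phi, Phi^m alpha, V).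
   Conversely, run m copies of the torus side by side together with m clock
   coordinates, shifting copies and clocks along a fixed map of the indices
   at each step and applying Phi to a single copy.  The clocks start at
   (1, x, ..., x) with x outside {0, 1}, which exists as K <> F_2; watching
   whether one clock equals 1 detects m | n (resp. n >= m), while the
   watched copy holds Phi^(n/m) alpha (resp. Phi^(n-m) alpha). *)

Section MonomialFactors.
Variables (K : fieldType) (n : nat).
Implicit Types (p q : {mpoly K[n]}) (mu : 'X_{1..n}).

Lemma mcoeff_mlastM p q :
  (p * q)@_(mlast p + mlast q) = p@_(mlast p) * q@_(mlast q).
Proof.
have [->|nz_p] := eqVneq p 0; first by rewrite mul0r !mcoeff0 mul0r.
have [->|nz_q] := eqVneq q 0; first by rewrite mulr0 !mcoeff0 mulr0.
rewrite mpolyME (bigD1_seq (mlast p, mlast q)) /=; first last.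
- by rewrite allpairs_uniq => // -[? ?] [].
- by rewrite allpairs_f // !mlast_supp.
rewrite mcoeffD mcoeffZ mcoeffX eqxx mulr1 big_seq_cond raddf_sum /= big1 ?addr0 //.
case=> m1 m2; rewrite in_allpairs //= -andbA => /and3P[m1_p m2_q ne_m].
rewrite mcoeffZ mcoeffX gt_eqF ?mulr0 //.
have le1 := mlast_lemc m1_p; have le2 := mlast_lemc m2_q.
move: ne_m; rewrite xpair_eqE negb_and => /orP[ne1|ne2].
- by apply: ltmc_le_add => //; rewrite lt_neqAle le1 andbT eq_sym.
- by apply: lemc_lt_add => //; rewrite lt_neqAle le2 andbT eq_sym.
Qed.

Lemma mlast_eq_mlead p : mlast p = mlead p -> p = p@_(mlead p) *: 'X_[mlead p].
Proof.
move=> last_lead; apply/mpolyP => m; rewrite mcoeffZ mcoeffX.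
have [<-|ne_m] := eqVneq (mlead p) m; first by rewrite mulr1.
rewrite mulr0; apply: memN_msupp_eq0; apply: contra ne_m => m_p.
by rewrite eq_le (msupp_le_mlead m_p) andbT -last_lead mlast_lemc.
Qed.

(* The units of the Laurent polynomial ring are its monomials. *)
Lemma monomial_factor p q (c : K) mu : c != 0 -> p * q = c *: 'X_[mu] ->
  exists c' nu, c' != 0 /\ p = c' *: 'X_[nu].
Proof.
move=> nz_c pqE.
have supp_pq : msupp (p * q) = [:: mu] by rewrite pqE msuppMCX.
have [nz_p nz_q] : p != 0 /\ q != 0.
  by apply/andP; rewrite -negb_or -mulf_eq0 -msupp_eq0 supp_pq.
have last_pq : (mlast p + mlast q)%MM = mu.
  have : (mlast p + mlast q)%MM \in msupp (p * q).
    by rewrite mcoeff_msupp mcoeff_mlastM mulf_neq0 // -mcoeff_msupp mlast_supp.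
  by rewrite supp_pq inE => /eqP.
have lead_pq : (mlead p + mlead q)%MM = mu by rewrite -mleadM // pqE mleadZ // mleadXm.
have last_lead : mlast p = mlead p.
  apply/eqP; apply: contraT => ne_p.
  have : ((mlast p + mlast q)%MM < (mlead p + mlead q)%MM)%O.
    apply: ltmc_le_add; last exact: msupp_le_mlead (mlast_supp nz_q).
    by rewrite lt_neqAle ne_p msupp_le_mlead // mlast_supp.
  by rewrite last_pq lead_pq ltxx.
by exists p@_(mlead p), (mlead p); rewrite mleadc_eq0 -mlast_eq_mlead.
Qed.

End MonomialFactors.

Section MonomialMaps.
Variable K : fieldType.
Implicit Types T U W : finType.

Definition nowhere_zero (T : Type) (a : T -> K) := forall j, a j != 0.

Definition monomial_fun T (h : (T -> K) -> K) := exists (c : K) (z : T -> int),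
  c != 0 /\ forall a, nowhere_zero a -> h a = c * \prod_j a j ^ z j.

Definition monomial_map T U (f : (T -> K) -> U -> K) :=
  forall u, monomial_fun (fun a => f a u).

Lemma monomial_fun_neq0 T h (a : T -> K) :
  monomial_fun h -> nowhere_zero a -> h a != 0.
Proof.
move=> [c [z [nz_c hE]]] nz_a; rewrite hE // mulf_neq0 // prodf_seq_neq0.
by apply/allP => j _; rewrite expfz_neq0.
Qed.

Lemma monomial_map_nowhere_zero T U (f : (T -> K) -> U -> K) a :
  monomial_map f -> nowhere_zero a -> nowhere_zero (f a).
Proof. by move=> mon_f nz_a u; apply: monomial_fun_neq0 (mon_f u) nz_a. Qed.

Lemma eq_monomial_fun T (h1 h2 : (T -> K) -> K) :
  (forall a, nowhere_zero a -> h1 a = h2 a) -> monomial_fun h1 -> monomial_fun h2.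
Proof.
by move=> eq_h [c [z [nz_c h1E]]]; exists c, z; split=> // a nz_a; rewrite -eq_h ?h1E.
Qed.

Lemma monomial_fun_cst T (c : K) : c != 0 -> monomial_fun (fun _ : T -> K => c).
Proof.
move=> nz_c; exists c, (fun=> 0); split=> // a _.
by rewrite big1 ?mulr1 // => j _; rewrite expr0z.
Qed.

Lemma monomial_fun_coord T (j : T) : monomial_fun (fun a => a j).
Proof.
exists 1, (fun i => (i == j)%:Z); split=> [|a _]; first exact: oner_neq0.
rewrite mul1r (bigD1 j) //= eqxx expr1z big1 ?mulr1 // => i /negbTE ->.
exact: expr0z.
Qed.

Lemma monomial_funM T (h1 h2 : (T -> K) -> K) :
  monomial_fun h1 -> monomial_fun h2 -> monomial_fun (fun a => h1 a * h2 a).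
Proof.
move=> [c1 [z1 [nz_c1 h1E]]] [c2 [z2 [nz_c2 h2E]]].
exists (c1 * c2), (fun j => z1 j + z2 j); split=> [|a nz_a]; first exact: mulf_neq0.
rewrite h1E // h2E // mulrACA -big_split /=; congr (_ * _).
by apply: eq_bigr => j _; rewrite expfzDr.
Qed.

Lemma monomial_funXz T (h : (T -> K) -> K) (e : int) :
  monomial_fun h -> monomial_fun (fun a => h a ^ e).
Proof.
move=> [c [z [nz_c hE]]]; exists (c ^ e), (fun j => z j * e).
split=> [|a nz_a]; first exact: expfz_neq0.
rewrite hE // expfzMl (big_morph (fun x => x ^ e) (fun x y => expfzMl x y e) (exp1rz _ _)).
by congr (_ * _); apply: eq_bigr => j _; rewrite exprz_exp.
Qed.

Lemma monomial_fun_prod T (I : Type) (r : seq I) (F : I -> (T -> K) -> K) :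
  (forall i, monomial_fun (F i)) -> monomial_fun (fun a => \prod_(i <- r) F i a).
Proof.
move=> mon_F; elim: r => [|i r IHr].
  by apply: eq_monomial_fun (monomial_fun_cst _ (oner_neq0 K)) => a _; rewrite big_nil.
by apply: eq_monomial_fun (monomial_funM (mon_F i) IHr) => a _; rewrite big_cons.
Qed.

Lemma monomial_fun_comp T U (h : (U -> K) -> K) (f : (T -> K) -> U -> K) :
  monomial_fun h -> monomial_map f -> monomial_fun (fun a => h (f a)).
Proof.
move=> [c [z [nz_c hE]]] mon_f.
have mon_prod := monomial_fun_prod (index_enum U) (fun u => monomial_funXz (z u) (mon_f u)).
apply: eq_monomial_fun (monomial_funM (monomial_fun_cst _ nz_c) mon_prod) => a nz_a.
by rewrite hE //; apply: monomial_map_nowhere_zero mon_f nz_a.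
Qed.

Lemma monomial_map_comp T U W (f : (T -> K) -> U -> K) (g : (U -> K) -> W -> K) :
  monomial_map f -> monomial_map g -> monomial_map (fun a => g (f a)).
Proof. by move=> mon_f mon_g w; apply: monomial_fun_comp (mon_g w) mon_f. Qed.

Lemma monomial_map_pull T U (g : U -> T) : monomial_map (fun (a : T -> K) u => a (g u)).
Proof. by move=> u; apply: monomial_fun_coord. Qed.

Lemma monomial_map_iter T (f : (T -> K) -> T -> K) n :
  monomial_map f -> monomial_map (iter n f).
Proof.
move=> mon_f; elim: n => [|n IHn]; first exact: monomial_map_pull.
exact: monomial_map_comp IHn mon_f.
Qed.

Lemma eq_iter_nowhere_zero T (f g : (T -> K) -> T -> K) a n :
  monomial_map f -> (forall b, nowhere_zero b -> g b = f b) -> nowhere_zero a ->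
  iter n g a = iter n f a.
Proof.
move=> mon_f eq_gf nz_a; elim: n => //= n ->.
by rewrite eq_gf //; apply: monomial_map_nowhere_zero (monomial_map_iter n mon_f) nz_a.
Qed.

End MonomialMaps.

Section TorusEndomorphisms.
Variables (K : fieldType) (k : nat).

Lemma meval_laurent_monomial (c : K) (mu : 'X_{1..k}) (d : nat) (a : 'I_k -> K) :
  nowhere_zero a ->
  (c *: 'X_[mu]).@[a] / (\prod_j a j) ^+ d = c * \prod_j a j ^ ((mu j)%:Z - d%:Z).
Proof.
move=> nz_a; rewrite mevalZ mevalX -mulrA -prodrXl -prodf_div; congr (_ * _).
by apply: eq_bigr => j _; rewrite expfzDr // -exprnN.
Qed.

Lemma torus_endo_monomial (num : 'I_k -> {mpoly K[k]}) den :
  is_torus_endo num den -> monomial_map (torus_map num den).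
Proof.
move=> endo i; have [q [d numqE]] := endo i.
have [c [nu [nz_c numE]]] : exists c nu, c != 0 /\ num i = c *: 'X_[nu].
  apply: (monomial_factor (q := q) (oner_neq0 K) (mu := [multinom (den i + d)%N | _ < k])).
  rewrite numqE scale1r mpolyXE_id /xprod -prodrXl.
  by apply: eq_bigr => j _; rewrite mnmE.
exists c, (fun j => (nu j)%:Z - (den i)%:Z); split=> // a nz_a.
by rewrite /torus_map numE meval_laurent_monomial.
Qed.

Lemma monomial_fun_laurent (h : ('I_k -> K) -> K) : monomial_fun h ->
  exists Pd : {mpoly K[k]} * nat,
    (exists q d, Pd.1 * q = xprod K k ^+ (Pd.2 + d)) /\
    forall a, nowhere_zero a -> Pd.1.@[a] / (\prod_j a j) ^+ Pd.2 = h a.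
Proof.
move=> [c [z [nz_c hE]]].
(* c * prod_j a_j ^ z_j = c * a ^ (z + N) / (prod_j a_j) ^ N, where N bounds every |z_j|. *)
pose N := (\sum_j absz (z j))%N.
have le_zN j : (absz (z j) <= N)%N by rewrite /N (bigD1 j) //= leq_addr.
exists (c *: 'X_[[multinom absz (z j + N%:Z)%R | j < k]], N); split=> /=.
  exists (c^-1 *: 'X_[[multinom absz (N%:Z - z j)%R | j < k]]), N.
  rewrite -scalerAl -scalerAr scalerA divff // scale1r -mpolyXD.
  rewrite /xprod -prodrXl mpolyXE_id; apply: eq_bigr => j _; congr (_ ^+ _).
  by rewrite mnmDE !mnmE; have := le_zN j; lia.
move=> a nz_a; rewrite meval_laurent_monomial // hE //; congr (_ * _).
by apply: eq_bigr => j _; rewrite mnmE; congr (_ ^ _); have := le_zN j; lia.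
Qed.

Lemma monomial_map_torus_endo (f : ('I_k -> K) -> 'I_k -> K) : monomial_map f ->
  exists num den, is_torus_endo num den /\
    forall a, nowhere_zero a -> torus_map num den a = f a.
Proof.
move=> mon_f; have [Pd PdP] := fin_all_exists (fun i => monomial_fun_laurent (mon_f i)).
exists (fun i => (Pd i).1), (fun i => (Pd i).2); split=> [i|a nz_a].
  by case: (PdP i).
by apply: functional_extensionality => i; case: (PdP i) => _ <-.
Qed.

End TorusEndomorphisms.

Section MonomialDML.
Variable K : fieldType.

Definition DML_monomial k (S : nat -> Prop) :=
  exists f : ('I_k -> K) -> 'I_k -> K, monomial_map f /\
  exists alpha, nowhere_zero alpha /\ exists V : seq {mpoly K[k]},
  forall n, S n <-> (forall P, P \in V -> P.@[iter n f alpha] = 0).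

Lemma DML_torusP k S : DML_torus K k S <-> DML_monomial k S.
Proof.
split=> [[num [den [endo [al [nz_al [V SE]]]]]] | [f [mon_f [al [nz_al [V SE]]]]]].
  exists (torus_map num den); split; first exact: torus_endo_monomial.
  by exists al; split=> //; exists V.
have [num [den [endo eq_f]]] := monomial_map_torus_endo mon_f.
exists num, den; split=> //; exists al; split=> //; exists V => n.
by rewrite (eq_iter_nowhere_zero n mon_f eq_f nz_al).
Qed.

Lemma scale_setE m S n : (0 < m)%N -> scale_set m S n <-> (m %| n)%N /\ S (n %/ m)%N.
Proof.
move=> m_gt0; split=> [[s [Ss ->]] | [/dvdnP[s ->]]]; first by rewrite dvdn_mulr // mulKn.
by rewrite mulnK // => Ss; exists s; rewrite mulnC.
Qed.

Lemma shift_setE m S n : shift_set m S n <-> (m <= n)%N /\ S (n - m)%N.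
Proof.
split=> [[s [Ss ->]] | [le_mn Snm]]; first by rewrite leq_addr addKn.
by exists (n - m)%N; rewrite subnKC.
Qed.

Lemma DML_monomial_of_scale k m S :
  (0 < m)%N -> DML_monomial k (scale_set m S) -> DML_monomial k S.
Proof.
move=> m_gt0 [f [mon_f [al [nz_al [V SE]]]]].
exists (iter m f); split; first exact: monomial_map_iter.
exists al; split=> //; exists V => n.
by rewrite -iterM -SE scale_setE // dvdn_mull // mulnK //; split=> [|[]].
Qed.

Lemma DML_monomial_of_shift k m S :
  DML_monomial k (shift_set m S) -> DML_monomial k S.
Proof.
move=> [f [mon_f [al [nz_al [V SE]]]]].
exists f; split=> //; exists (iter m f al); split.
  exact: monomial_map_nowhere_zero (monomial_map_iter m mon_f) nz_al.
by exists V => n; rewrite -iterD -SE shift_setE leq_addl addnK; split=> [|[]].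
Qed.

Definition relabel (T : finType) (f : (T -> K) -> T -> K) :
  ('I_#|T| -> K) -> 'I_#|T| -> K :=
  fun a i => f (fun x => a (enum_rank x)) (enum_val i).

Lemma iter_relabel (T : finType) (f : (T -> K) -> T -> K) n a :
  iter n (relabel f) (fun i => a (enum_val i)) = fun i => iter n f a (enum_val i).
Proof.
elim: n => //= n ->; apply: functional_extensionality => i; rewrite /relabel.
by congr (f _ _); apply: functional_extensionality => x; rewrite enum_rankK.
Qed.

Lemma monomial_map_relabel (T : finType) (f : (T -> K) -> T -> K) :
  monomial_map f -> monomial_map (relabel f).
Proof.
move=> mon_f; have mon_f_rank := monomial_map_comp (monomial_map_pull K enum_rank) mon_f.
exact: monomial_map_comp mon_f_rank (monomial_map_pull K enum_val).
Qed.

Lemma DML_split_torus_observe (T : finType) k (f : (T -> K) -> T -> K) alpha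
    (x0 : T) (sel : 'I_k -> T) (V : seq {mpoly K[k]}) (U : nat -> Prop) :
  monomial_map f -> nowhere_zero alpha ->
  (forall n, U n <-> iter n f alpha x0 = 1 /\
     forall P, P \in V -> P.@[fun i => iter n f alpha (sel i)] = 0) ->
  DML_split_torus K U.
Proof.
move=> mon_f nz_al UE; exists #|T|; split; first by apply/card_gt0P; exists x0.
apply/DML_torusP; exists (relabel f); split; first exact: monomial_map_relabel.
exists (fun i => alpha (enum_val i)); split=> [i|]; first exact: nz_al.
exists ('X_(enum_rank x0) - 1 :: [seq P \mPo [tuple 'X_(enum_rank (sel i)) | i < k] | P <- V]).
move=> n; rewrite UE iter_relabel.
set b := iter n f alpha.
have coordE x : ('X_(enum_rank x)).@[fun i => b (enum_val i)] = b x.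
  by rewrite mevalXU enum_rankK.
have compE P : (P \mPo [tuple 'X_(enum_rank (sel i)) | i < k]).@[fun i => b (enum_val i)]
    = P.@[fun i => b (sel i)].
  by rewrite comp_mpoly_meval; apply: meval_eq => i; rewrite tnth_mktuple coordE.
split=> [[b_x0 zero_V] P | zero_all].
  rewrite inE => /predU1P[-> | /mapP[Q VQ ->]]; last by rewrite compE zero_V.
  by rewrite mevalB coordE meval1 b_x0 subrr.
split=> [|Q VQ].
  have := zero_all _ (mem_head _ _).
  by rewrite mevalB coordE meval1 => /eqP; rewrite subr_eq0 => /eqP.
by rewrite -compE zero_all // inE map_f ?orbT.
Qed.

End MonomialDML.

Section Block.
Variables (K : fieldType) (k M : nat).
Variables (Phi : ('I_k -> K) -> 'I_k -> K) (sig : 'I_M -> 'I_M) (j0 : 'I_M).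

(* (j, None) is the j-th clock and (j, Some i) the i-th coordinate of the j-th
   copy of the torus; copy j is refreshed from copy (sig j), through Phi when
   j = j0. *)
Definition block_step (b : 'I_M * option 'I_k -> K) : 'I_M * option 'I_k -> K :=
  fun x => match x with
  | (j, None) => b (sig j, None)
  | (j, Some i) => if j == j0 then Phi (fun i' => b (sig j, Some i')) i
                   else b (sig j, Some i)
  end.

Definition block_copy (b : 'I_M * option 'I_k -> K) j : 'I_k -> K := fun i => b (j, Some i).

Lemma block_copy_step b j : block_copy (block_step b) j =
  if j == j0 then Phi (block_copy b (sig j)) else block_copy b (sig j).
Proof. by rewrite /block_copy /=; case: (j == j0). Qed.

Lemma monomial_map_block_step : monomial_map Phi -> monomial_map block_step.
Proof.
move=> mon_Phi [j [i|]] /=; last exact: monomial_fun_coord.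
case: (j == j0); last exact: monomial_fun_coord.
exact: monomial_fun_comp (mon_Phi i) (monomial_map_pull K (fun i' => (sig j, Some i'))).
Qed.

Definition block_init (alpha : 'I_k -> K) (x : K) : 'I_M * option 'I_k -> K :=
  fun y => match y with
  | (j, None) => if val j == 0%N then 1 else x
  | (_, Some i) => alpha i
  end.

Lemma block_init_nowhere_zero alpha x :
  x != 0 -> nowhere_zero alpha -> nowhere_zero (block_init alpha x).
Proof. by move=> nz_x nz_al [j [i|]] //=; case: ifP; rewrite ?oner_neq0. Qed.

End Block.

Lemma if1_eq1 (R : nzRingType) (c : bool) (x : R) :
  x != 1 -> (if c then 1 else x) = 1 <-> c.
Proof. by move=> x_neq1; case: c; split=> // x1; rewrite x1 eqxx in x_neq1. Qed.

Section ScaleBlock.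
Variables (K : fieldType) (k m : nat) (Phi : ('I_k -> K) -> 'I_k -> K).
Variables (alpha : 'I_k -> K) (x : K).

Let step := block_step Phi (@ordS m.+1) ord_max.

Lemma scale_block_clock n (j : 'I_m.+1) :
  iter n step (block_init alpha x) (j, None) =
  if ((j + n) %% m.+1 == 0)%N then 1 else x.
Proof.
elim: n j => [|n IHn] j; first by rewrite addn0 modn_small.
by rewrite iterS /= IHn /= modnDml addSnnS.
Qed.

Lemma scale_block_copy n (j : 'I_m.+1) :
  block_copy (iter n step (block_init alpha x)) j = iter ((j + n) %/ m.+1) Phi alpha.
Proof.
elim: n j => [|n IHn] j; first by rewrite addn0 divn_small.
rewrite iterS block_copy_step IHn.
have [->|ne_j] := eqVneq j ord_max.
  by rewrite /= modnn add0n -addSnnS addnC divnDr // divnn addn1.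
have lt_jm : (j < m)%N.
  by rewrite ltn_neqAle -ltnS ltn_ord andbT; move: ne_j; rewrite -(inj_eq val_inj).
by rewrite /= modn_small ?ltnS // addSnnS.
Qed.

End ScaleBlock.

Lemma inord_pred m (j : 'I_m.+1) : (inord j.-1 : 'I_m.+1) = j.-1 :> nat.
Proof. by rewrite inordK // (leq_ltn_trans (leq_pred j)). Qed.

Section ShiftBlock.
Variables (K : fieldType) (k m : nat) (Phi : ('I_k -> K) -> 'I_k -> K).
Variables (alpha : 'I_k -> K) (x : K).

Let step := block_step Phi (fun j : 'I_m.+1 => inord j.-1) ord0.

Lemma shift_block_clock n (j : 'I_m.+1) :
  iter n step (block_init alpha x) (j, None) = if (j <= n)%N then 1 else x.
Proof.
elim: n j => [|n IHn] j; first by rewrite leqn0.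
by rewrite iterS /= IHn inord_pred; case: (nat_of_ord j).
Qed.

Lemma shift_block_copy n (j : 'I_m.+1) :
  block_copy (iter n step (block_init alpha x)) j = iter (n - j) Phi alpha.
Proof.
elim: n j => [|n IHn] j; first by rewrite sub0n.
rewrite iterS block_copy_step IHn inord_pred.
have [->|ne_j] := eqVneq j ord0; first by rewrite !subn0.
have j_gt0 : (0 < j)%N by rewrite lt0n; move: ne_j; rewrite -(inj_eq val_inj).
by congr (iter _ _ _); lia.
Qed.

End ShiftBlock.

Lemma DML_split_torus_scale (K : fieldType) (x : K) k m S : x != 0 -> x != 1 ->
  (0 < m)%N -> DML_monomial K k S -> DML_split_torus K (scale_set m S).
Proof.
move=> nz_x x_neq1; case: m => // m _ [f [mon_f [al [nz_al [V SE]]]]].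
apply: (DML_split_torus_observe (x0 := (ord0, None)) (sel := fun i => (ord0, Some i)) (V := V)
  (monomial_map_block_step (@ordS m.+1) ord_max mon_f) (block_init_nowhere_zero nz_x nz_al)).
move=> n; have := scale_block_copy f al x n ord0; rewrite /block_copy => ->.
by rewrite scale_block_clock add0n if1_eq1 // scale_setE // SE.
Qed.

Lemma DML_split_torus_shift (K : fieldType) (x : K) k m S : x != 0 -> x != 1 ->
  DML_monomial K k S -> DML_split_torus K (shift_set m S).
Proof.
move=> nz_x x_neq1 [f [mon_f [al [nz_al [V SE]]]]].
apply: (DML_split_torus_observe (x0 := (ord_max, None)) (sel := fun i => (ord_max, Some i))
  (V := V) (monomial_map_block_step (fun j : 'I_m.+1 => inord j.-1) ord0 mon_f)
  (block_init_nowhere_zero nz_x nz_al)).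
move=> n; have := shift_block_copy f al x n ord_max; rewrite /block_copy => ->.
by rewrite shift_block_clock if1_eq1 // shift_setE SE.
Qed.

Unset Implicit Arguments.

Theorem lemma2p3 (K : fieldType)
  (hK : exists x : K, x != 0 /\ x != 1)
  (S : nat -> Prop) (m : nat) (hm : (0 < m)%N) :
  (DML_split_torus K (scale_set m S) <-> DML_split_torus K S) /\
  (DML_split_torus K (shift_set m S) <-> DML_split_torus K S).
Proof.
have [x [nz_x x_neq1]] := hK.
split; split=> [[k [k_gt0 /DML_torusP DML_image]] | [k [_ /DML_torusP DML_S]]].
- by exists k; split=> //; apply/DML_torusP; apply: DML_monomial_of_scale hm DML_image.
- exact: DML_split_torus_scale nz_x x_neq1 hm DML_S.
- by exists k; split=> //; apply/DML_torusP; apply: DML_monomial_of_shift DML_image.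
- exact: DML_split_torus_shift nz_x x_neq1 DML_S.
Qed.
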